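(* Let $N$ be a finite set with $|N|\ge2$ and let $o\in\mathbb{R}^{\Upsilon}$ be an SE objective. Let $P'\subseteq\mathbb{R}^{\Upsilon}$ be the polyhedron specified by all inequalities $\langle o',\eta\rangle\le u'$ that define SE faces of $P_N$ (i.e. $o'$ is an SE objective and $\langle o',\eta\rangle\le u'$ is valid for all $\eta\in P_N$). Then the maximum of $\eta\mapsto\langle o,\eta\rangle$ over $P'$ equals its maximum over $P_N$.
   Context: $\mathrm{DAG}(N)$ is the set of acyclic directed graphs over $N$; $\mathrm{pa}_G(a)$ is the parent set of $a$ in $G$; $G\sim H$ (Markov equivalence) means same adjacencies and same immoralities (induced $a\to c\leftarrow b$ with $a,b$ non-adjacent). $\Upsilon=\{(a|B): a\in N,\ \emptyset\neq B\subseteq N\setminus\{a\}\}$; $\eta_G\in\mathbb{R}^{\Upsilon}$ has $\eta_G(a|B)=1$ if $B=\mathrm{pa}_G(a)$, else $0$; $P_N=\mathrm{conv}\{\eta_G:G\in\mathrm{DAG}(N)\}$. $o\in\mathbb{R}^{\Upsilon}$ is an SE objective if $\langle o,\eta_G\rangle=\langle o,\eta_H\rangle$ whenever $G\sim H$. *)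

From HB Require Import structures.
From mathcomp Require Import all_boot all_order all_algebra.
From mathcomp Require Import reals.
Set Implicit Arguments. Unset Strict Implicit. Unset Printing Implicit Defensive.
Import Order.TTheory GRing.Theory Num.Theory.
Local Open Scope ring_scope.

Section Defs.
Variable T : finType.

(* A directed graph over T is given by its set of arcs (x,y) meaning x -> y. *)
Definition arc (E : {set prod T T}) : rel T := fun x y => (x, y) \in E.

(* acyclic: no arc x -> y with y reaching x by a directed path
   (this also excludes loops) *)
Definition acyclic (E : {set prod T T}) : bool :=
  [forall x : T, forall y : T, ((x, y) \in E) ==> ~~ connect (arc E) y x].

Definition pa (E : {set prod T T}) (a : T) : {set T} := [set b | (b, a) \in E].

Definition adj (E : {set prod T T}) (a b : T) : bool := ((a, b) \in E) || ((b, a) \in E).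

Definition immorality (E : {set prod T T}) (a c b : T) : bool :=
  [&& (a, c) \in E, (b, c) \in E, a != b & ~~ adj E a b].

Definition markov_equiv (E F : {set prod T T}) : Prop :=
  (forall a b, adj E a b = adj F a b) /\
  (forall a c b, immorality E a c b = immorality F a c b).

(* Upsilon = {(a|B) : a in N, B nonempty, B subset of N \ {a}} *)
Definition Ups := {p : T * {set T} | (p.2 != set0) && (p.1 \notin p.2)}.

Variable R : realType.

Definition eta (E : {set prod T T}) : Ups -> R :=
  fun u => if (val u).2 == pa E (val u).1 then 1 else 0.

Definition dot (o eta' : Ups -> R) : R := \sum_(u : Ups) o u * eta' u.

Definition SE (o : Ups -> R) : Prop :=
  forall E F, acyclic E -> acyclic F -> markov_equiv E F ->
    dot o (eta E) = dot o (eta F).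

Definition inPN (x : Ups -> R) : Prop :=
  exists lam : {set prod T T} -> R,
    (forall E, 0 <= lam E) /\
    \sum_(E | acyclic E) lam E = 1 /\
    (forall u, x u = \sum_(E | acyclic E) lam E * eta E u).

Definition inP' (x : Ups -> R) : Prop :=
  forall (o' : Ups -> R) (u' : R), SE o' ->
    (forall y, inPN y -> dot o' y <= u') -> dot o' x <= u'.

Definition is_max (S : (Ups -> R) -> Prop) (f : (Ups -> R) -> R) (M : R) : Prop :=
  (exists x, S x /\ f x = M) /\ (forall x, S x -> f x <= M).
End Defs.

From mathcomp Require Import all_boot all_order all_algebra reals.
Set Implicit Arguments. Unset Strict Implicit. Unset Printing Implicit Defensive.
Local Open Scope ring_scope.
Import Order.TTheory GRing.Theory Num.Theory.

(* P' contains P_N, since every inequality defining P' is valid on P_N. Conversely the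
   objective o is itself SE, so the inequality <o, eta> <= max_{P_N} <o, eta> is one of
   those defining P'. Both maxima are therefore attained at a DAG vertex eta_G
   maximising o, which exists because there are finitely many DAGs. *)

Section Polytope.
Variables (T : finType) (R : realType).
Implicit Types (o x : Ups T -> R) (E : {set T * T}).

Lemma acyclic0 : acyclic (set0 : {set T * T}).
Proof. by apply/forallP=> x; apply/forallP=> y; rewrite in_set0. Qed.

Lemma exists_max_dag o :
  exists2 G, acyclic G & forall E, acyclic E -> dot o (eta R E) <= dot o (eta R G).
Proof.
by case: (Order.TotalTheory.arg_maxP (fun E => dot o (eta R E)) acyclic0) => G; exists G.
Qed.

Lemma dot_conv o x (lam : {set T * T} -> R) :
  (forall u, x u = \sum_(E | acyclic E) lam E * eta R E u) ->
  dot o x = \sum_(E | acyclic E) lam E * dot o (eta R E).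
Proof.
move=> xE; rewrite /dot; under eq_bigr => u _ do rewrite xE big_distrr.
rewrite exchange_big; apply: eq_bigr => E _ /=.
by rewrite big_distrr; apply: eq_bigr => u _; rewrite mulrCA.
Qed.

Lemma inPN_eta G : acyclic G -> inPN (T:=T) (eta R G).
Proof.
move=> acG; exists (fun E => (E == G)%:R); split; first by move=> E; case: eqP.
have big_dirac (F : {set T * T} -> R) :
    \sum_(E | acyclic E) (E == G)%:R * F E = F G.
  by rewrite (bigD1 G) //= eqxx mul1r big1 ?addr0 // => E /andP[_ /negbTE ->]; rewrite mul0r.
split; last by move=> u; rewrite big_dirac.
by rewrite -[RHS](big_dirac (fun=> 1)); apply: eq_bigr => E _; rewrite mulr1.
Qed.

Lemma inPN_dot_le o M :
  (forall E, acyclic E -> dot o (eta R E) <= M) ->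
  forall x, inPN (T:=T) x -> dot o x <= M.
Proof.
move=> leM x [lam [lam_ge0 [lam_sum1 xE]]].
rewrite (dot_conv o xE) -[M]mul1r -lam_sum1 big_distrl /=.
by apply: ler_sum => E acE; rewrite ler_wpM2l ?leM.
Qed.

Lemma inPN_inP' x : inPN (T:=T) x -> inP' x.
Proof. by move=> PNx o' u' _; apply. Qed.

End Polytope.

Theorem lemma12 (R : realType) (T : finType) (hN : (2 <= #|T|)%N)
  (o : Ups T -> R) (hSE : SE o) :
  exists M : R, is_max (@inP' T R) (dot o) M /\ is_max (@inPN T R) (dot o) M.
Proof.
(* The argument works for any finite node set. *)
have [G acG maxG] := exists_max_dag o.
have PN_le := inPN_dot_le maxG.
exists (dot o (eta R G)); split; split.
- by exists (eta R G); split => //; apply/inPN_inP'/inPN_eta.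
- by move=> x P'x; exact: P'x o _ hSE PN_le.
- by exists (eta R G); split => //; apply: inPN_eta.
- exact: PN_le.
Qed.
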